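(* For every $k\in\mathbb Z$ there is an isomorphism of (strict) monoidal categories $\omega:\mathcal{H}eis_k\to(\mathcal{H}eis_{-k})^{\mathrm{op}}$ which interchanges the objects $\uparrow$ and $\downarrow$ and is defined on generating morphisms by $x\mapsto x'$, $s\mapsto -s'$, $c\mapsto d$ and $d\mapsto c$, where $x',s'$ (and the $c,d$ on the right) denote the morphisms of $\mathcal{H}eis_{-k}$ defined in the context.
   Context: Fix a commutative ring $\Bbbk$. For an integer $m$, the Heisenberg category $\mathcal{H}eis_m$ is the strict $\Bbbk$-linear monoidal category generated by objects $\uparrow,\downarrow$ and morphisms $x:\uparrow\to\uparrow$, $s:\uparrow\otimes\uparrow\to\uparrow\otimes\uparrow$, $c:\mathbf 1\to\downarrow\otimes\uparrow$, $d:\uparrow\otimes\downarrow\to\mathbf 1$ ($\mathbf 1$ the unit object, $1_X$ identities, $\circ$ composition, $x^n$ the $n$-fold composite), subject to the following relations, where $t:=(1_\downarrow\otimes 1_\uparrow\otimes d)\circ(1_\downarrow\otimes s\otimes 1_\downarrow)\circ(c\otimes 1_\uparrow\otimes 1_\downarrow):\uparrow\otimes\downarrow\to\downarrow\otimes\uparrow$: (H) $s\circ s=1_{\uparrow\otimes\uparrow}$; $(s\otimes 1_\uparrow)\circ(1_\uparrow\otimes s)\circ(s\otimes 1_\uparrow)=(1_\uparrow\otimes s)\circ(s\otimes 1_\uparrow)\circ(1_\uparrow\otimes s)$; $(x\otimes 1_\uparrow)\circ s-s\circ(1_\uparrow\otimes x)=1_{\uparrow\otimes\uparrow}$. (A)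 $(d\otimes 1_\uparrow)\circ(1_\uparrow\otimes c)=1_\uparrow$ and $(1_\downarrow\otimes d)\circ(c\otimes 1_\downarrow)=1_\downarrow$. (I) If $m\ge0$, the morphism $\uparrow\otimes\downarrow\to(\downarrow\otimes\uparrow)\oplus\mathbf 1^{\oplus m}$ with components $t$ and $d\circ(x^r\otimes 1_\downarrow)$, $r=0,\dots,m-1$, is an isomorphism in the additive envelope; if $m<0$, the morphism $(\uparrow\otimes\downarrow)\oplus\mathbf 1^{\oplus(-m)}\to\downarrow\otimes\uparrow$ with components $t$ and $(1_\downarrow\otimes x^r)\circ c$, $r=0,\dots,-m-1$, is an isomorphism in the additive envelope (formally, the entries of a two-sided inverse matrix are adjoined as generators). In $\mathcal{H}eis_m$ define $x':=(1_\downarrow\otimes d)\circ(1_\downarrow\otimes x\otimes 1_\downarrow)\circ(c\otimes 1_\downarrow):\downarrow\to\downarrow$ and $s':=(1_\downarrow\otimes 1_\downarrow\otimes d)\circ(1_\downarrow\otimes t\otimes 1_\downarrow)\circ(c\otimes 1_\downarrow\otimes 1_\downarrow):\downarrow\otimes\downarrow\to\downarrow\otimes\downarrow$ (the right mates of $x$ and $s$). $\mathcal C^{\mathrm{op}}$ denotes the opposite category with the same tensor product. *)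

(* A from-scratch presentation of the Heisenberg category
   Heis_k as a strict K-linear monoidal category given by generators and
   relations: morphisms of Heis_k from a to b are the raw terms t with
   [ty k t = Some (a, b)], modulo the congruence [heq k]. *)
From HB Require Import structures.
From mathcomp Require Import all_boot all_order all_algebra.
Set Implicit Arguments. Unset Strict Implicit. Unset Printing Implicit Defensive.
Import Order.TTheory GRing.Theory Num.Theory.

(* Objects: words in {up, down}; true = up, false = down; tensor = concatenation. *)
Definition obj := seq bool.
Definition up : obj := [:: true].
Definition dn : obj := [:: false].
Definition swapo (a : obj) : obj := map negb a.

Section Terms.
Variable K : comPzRingType.

Inductive term : Type :=
| tId of obj
| tX
| tS
| tC
| tD
| tInvT                      (* adjoined inverse entry  down up -> up down *)
| tInvC of nat
| tInvE of nat
| tComp of term & term       (* tComp g f = g \circ f *)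
| tTens of term & term
| tZero of obj & obj
| tAdd of term & term
| tScal of K & term.

Fixpoint ty (k : int) (t : term) : option (obj * obj) :=
  match t with
  | tId a => Some (a, a)
  | tX => Some (up, up)
  | tS => Some (up ++ up, up ++ up)
  | tC => Some ([::], dn ++ up)
  | tD => Some (up ++ dn, [::])
  | tInvT => Some (dn ++ up, up ++ dn)
  | tInvC r => if (0 <= k)%R && (r < absz k)%N then Some ([::], up ++ dn) else None
  | tInvE r => if (k < 0)%R && (r < absz k)%N then Some (dn ++ up, [::]) else None
  | tComp g f =>
      match ty k g, ty k f with
      | Some (b', c), Some (a, b) => if b == b' then Some (a, c) else None
      | _, _ => None
      end
  | tTens f g =>
      match ty k f, ty k g with
      | Some (a, b), Some (c, d) => Some (a ++ c, b ++ d)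
      | _, _ => None
      end
  | tZero a b => Some (a, b)
  | tAdd f g =>
      match ty k f, ty k g with
      | Some p, Some q => if p == q then Some p else None
      | _, _ => None
      end
  | tScal _ f => ty k f
  end.

Definition wt (k : int) (t : term) : bool := ty k t != None.

Definition tOpp (f : term) : term := tScal (-1)%R f.
Definition tSub (f g : term) : term := tAdd f (tOpp g).
Definition tsum (a b : obj) (fs : seq term) : term := foldr tAdd (tZero a b) fs.

Definition xpow (n : nat) : term := iter n (tComp tX) (tId up).

Definition tT : term :=
  tComp (tTens (tId (dn ++ up)) tD)
    (tComp (tTens (tId dn) (tTens tS (tId dn))) (tTens tC (tId (up ++ dn)))).

(* x' : down -> down and s' : down down -> down down (right mates) *)
Definition tX' : term :=
  tComp (tTens (tId dn) tD)
    (tComp (tTens (tId dn) (tTens tX (tId dn))) (tTens tC (tId dn))).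
Definition tS' : term :=
  tComp (tTens (tId (dn ++ dn)) tD)
    (tComp (tTens (tId dn) (tTens tT (tId dn))) (tTens tC (tId (dn ++ dn)))).

Definition dr (r : nat) : term := tComp tD (tTens (xpow r) (tId dn)).
Definition cr (r : nat) : term := tComp (tTens (tId dn) (xpow r)) tC.

Definition delta (r s : nat) : term :=
  if r == s then tId [::] else tZero [::] [::].

Inductive heq (k : int) : term -> term -> Prop :=
| heq_refl t : heq k t t
| heq_sym t u : heq k t u -> heq k u t
| heq_trans t u v : heq k t u -> heq k u v -> heq k t v
| heq_comp g g' f f' : heq k g g' -> heq k f f' -> heq k (tComp g f) (tComp g' f')
| heq_tens f f' g g' : heq k f f' -> heq k g g' -> heq k (tTens f g) (tTens f' g')
| heq_add f f' g g' : heq k f f' -> heq k g g' -> heq k (tAdd f g) (tAdd f' g')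
| heq_scal c f f' : heq k f f' -> heq k (tScal c f) (tScal c f')
| heq_compA h g f : wt k (tComp h (tComp g f)) ->
    heq k (tComp h (tComp g f)) (tComp (tComp h g) f)
| heq_id_l f : forall a b, ty k f = Some (a, b) -> heq k (tComp (tId b) f) f
| heq_id_r f : forall a b, ty k f = Some (a, b) -> heq k (tComp f (tId a)) f
| heq_addA f g h : wt k (tAdd f (tAdd g h)) ->
    heq k (tAdd f (tAdd g h)) (tAdd (tAdd f g) h)
| heq_addC f g : wt k (tAdd f g) -> heq k (tAdd f g) (tAdd g f)
| heq_add0 f : forall a b, ty k f = Some (a, b) -> heq k (tAdd f (tZero a b)) f
| heq_addN f : forall a b, ty k f = Some (a, b) -> heq k (tAdd f (tOpp f)) (tZero a b)
| heq_scalA c d f : wt k f -> heq k (tScal c (tScal d f)) (tScal (c * d)%R f)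
| heq_scal1 f : wt k f -> heq k (tScal 1%R f) f
| heq_scalDl c d f : wt k f ->
    heq k (tScal (c + d)%R f) (tAdd (tScal c f) (tScal d f))
| heq_scalDr c f g : wt k (tAdd f g) ->
    heq k (tScal c (tAdd f g)) (tAdd (tScal c f) (tScal c g))
| heq_compDl h f g : wt k (tComp (tAdd f g) h) ->
    heq k (tComp (tAdd f g) h) (tAdd (tComp f h) (tComp g h))
| heq_compDr h f g : wt k (tComp h (tAdd f g)) ->
    heq k (tComp h (tAdd f g)) (tAdd (tComp h f) (tComp h g))
| heq_compZl c g f : wt k (tComp (tScal c g) f) ->
    heq k (tComp (tScal c g) f) (tScal c (tComp g f))
| heq_compZr c g f : wt k (tComp g (tScal c f)) ->
    heq k (tComp g (tScal c f)) (tScal c (tComp g f))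
| heq_tensDl h f g : wt k (tTens (tAdd f g) h) ->
    heq k (tTens (tAdd f g) h) (tAdd (tTens f h) (tTens g h))
| heq_tensDr h f g : wt k (tTens h (tAdd f g)) ->
    heq k (tTens h (tAdd f g)) (tAdd (tTens h f) (tTens h g))
| heq_tensZl c g f : wt k (tTens (tScal c g) f) ->
    heq k (tTens (tScal c g) f) (tScal c (tTens g f))
| heq_tensZr c g f : wt k (tTens g (tScal c f)) ->
    heq k (tTens g (tScal c f)) (tScal c (tTens g f))
| heq_tensA f g h : wt k (tTens f (tTens g h)) ->
    heq k (tTens f (tTens g h)) (tTens (tTens f g) h)
| heq_tens1l f : wt k f -> heq k (tTens (tId [::]) f) f
| heq_tens1r f : wt k f -> heq k (tTens f (tId [::])) f
| heq_tensId a b : heq k (tTens (tId a) (tId b)) (tId (a ++ b))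
| heq_interchange f f' g g' : wt k (tTens (tComp f' f) (tComp g' g)) ->
    heq k (tComp (tTens f' g') (tTens f g)) (tTens (tComp f' f) (tComp g' g))
| heq_ss : heq k (tComp tS tS) (tId (up ++ up))
| heq_braid :
    heq k (tComp (tTens tS (tId up)) (tComp (tTens (tId up) tS) (tTens tS (tId up))))
          (tComp (tTens (tId up) tS) (tComp (tTens tS (tId up)) (tTens (tId up) tS)))
| heq_dAHA :
    heq k (tSub (tComp (tTens tX (tId up)) tS) (tComp tS (tTens (tId up) tX)))
          (tId (up ++ up))
| heq_adj1 : heq k (tComp (tTens tD (tId up)) (tTens (tId up) tC)) (tId up)
| heq_adj2 : heq k (tComp (tTens (tId dn) tD) (tTens tC (tId dn))) (tId dn)
(* relations (I), k >= 0: inverse of [t ; d o (x^r (x) 1)]_r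
   is the row [tInvT, tInvC r]_r *)
| heq_I1 : (0 <= k)%R ->
    heq k (tAdd (tComp tInvT tT)
                (tsum (up ++ dn) (up ++ dn)
                   [seq tComp (tInvC r) (dr r) | r <- iota 0 (absz k)]))
          (tId (up ++ dn))
| heq_I2 : (0 <= k)%R -> heq k (tComp tT tInvT) (tId (dn ++ up))
| heq_I3 r : (0 <= k)%R -> (r < absz k)%N ->
    heq k (tComp tT (tInvC r)) (tZero [::] (dn ++ up))
| heq_I4 r : (0 <= k)%R -> (r < absz k)%N ->
    heq k (tComp (dr r) tInvT) (tZero (dn ++ up) [::])
| heq_I5 r s : (0 <= k)%R -> (r < absz k)%N -> (s < absz k)%N ->
    heq k (tComp (dr r) (tInvC s)) (delta r s)
(* relations (I), k < 0: inverse of the row [t, (1 (x) x^r) o c]_r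
   is the column [tInvT ; tInvE r]_r *)
| heq_J1 : (k < 0)%R ->
    heq k (tAdd (tComp tT tInvT)
                (tsum (dn ++ up) (dn ++ up)
                   [seq tComp (cr r) (tInvE r) | r <- iota 0 (absz k)]))
          (tId (dn ++ up))
| heq_J2 : (k < 0)%R -> heq k (tComp tInvT tT) (tId (up ++ dn))
| heq_J3 r : (k < 0)%R -> (r < absz k)%N ->
    heq k (tComp tInvT (cr r)) (tZero [::] (up ++ dn))
| heq_J4 r : (k < 0)%R -> (r < absz k)%N ->
    heq k (tComp (tInvE r) tT) (tZero (up ++ dn) [::])
| heq_J5 r s : (k < 0)%R -> (r < absz k)%N -> (s < absz k)%N ->
    heq k (tComp (tInvE r) (cr s)) (delta r s).

(* F, acting on representative terms, induces a strict monoidal K-linear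
   functor Heis_k1 -> (Heis_k2)^op whose object map is swapo. *)
Definition op_monoidal_functor (k1 k2 : int) (F : term -> term) : Prop :=
  (forall t a b, ty k1 t = Some (a, b) -> ty k2 (F t) = Some (swapo b, swapo a)) /\
  (forall t u, wt k1 t -> heq k1 t u -> heq k2 (F t) (F u)) /\
  (forall a, heq k2 (F (tId a)) (tId (swapo a))) /\
      (forall g f, wt k1 (tComp g f) -> heq k2 (F (tComp g f)) (tComp (F f) (F g))) /\
      (forall f g, wt k1 (tTens f g) -> heq k2 (F (tTens f g)) (tTens (F f) (F g))) /\
      (forall f g, wt k1 (tAdd f g) -> heq k2 (F (tAdd f g)) (tAdd (F f) (F g))) /\
      (forall c f, wt k1 f -> heq k2 (F (tScal c f)) (tScal c (F f))).

End Terms.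
Arguments tX {K}. Arguments tS {K}. Arguments tC {K}. Arguments tD {K}.
Arguments tInvT {K}. Arguments tId {K}. Arguments tInvC {K}. Arguments tInvE {K}.
Arguments tZero {K}. Arguments xpow {K}. Arguments tT {K}. Arguments tX' {K}.
Arguments tS' {K}. Arguments dr {K}. Arguments cr {K}. Arguments delta {K}.

(* It is well defined because every defining relation of Heis_k is sent to a consequence of
   the relations of Heis_(-k): the adjunction relations (A) are exchanged; the relations (H)
   become the corresponding relations for the mates x' and s', which hold by rotating string
   diagrams; and the inversion relations (I) for k become those for -k, because omega(t) = -t
   (the left mate of -s' is -t) and omega(d o (x^r (x) 1)) = (1 (x) x^r) o c (dots slide around
   cups).  Applying omega twice yields the double mates x'' = x and s'' = s, so omega for -k
   inverts omega for k.
   The pure string-diagram identities are certified by computation: a diagram is a stack of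
   layers 1_p (x) g (x) 1_q, and an explicit list of moves (interchanging adjacent layers, or
   rewriting with a zigzag, s s = 1 or the braid relation) brings both sides to the same stack. *)

From HB Require Import structures.
From mathcomp Require Import all_boot all_order all_algebra.
From Stdlib Require Import Setoid Morphisms.
Import Order.TTheory GRing.Theory Num.Theory.
Set Implicit Arguments. Unset Strict Implicit. Unset Printing Implicit Defensive.

#[global] Hint Resolve heq_refl : core.

Section Congruence.
Variables (K : comPzRingType) (k : int).
Local Notation term := (term K).

#[global] Instance heq_Equivalence : Equivalence (@heq K k).
Proof. split; [exact: heq_refl | exact: heq_sym | exact: heq_trans]. Qed.
#[global] Instance tComp_Proper : Proper (@heq K k ==> @heq K k ==> @heq K k) (@tComp K).
Proof. by move=> ? ? ? ? ? ?; apply: heq_comp. Qed.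
#[global] Instance tTens_Proper : Proper (@heq K k ==> @heq K k ==> @heq K k) (@tTens K).
Proof. by move=> ? ? ? ? ? ?; apply: heq_tens. Qed.
#[global] Instance tAdd_Proper : Proper (@heq K k ==> @heq K k ==> @heq K k) (@tAdd K).
Proof. by move=> ? ? ? ? ? ?; apply: heq_add. Qed.
#[global] Instance tScal_Proper c : Proper (@heq K k ==> @heq K k) (@tScal K c).
Proof. by move=> ? ? ?; apply: heq_scal. Qed.

Lemma ty_xpow r : ty k (@xpow K r) = Some (up, up).
Proof. by elim: r => //= r ->. Qed.

Lemma ty_tsum a b (fs : seq term) :
  all (fun f => ty k f == Some (a, b)) fs -> ty k (tsum a b fs) = Some (a, b).
Proof. by elim: fs => //= f fs IH /andP[/eqP -> /IH ->]; rewrite eqxx. Qed.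

Lemma ty_tens (f g : term) a b c d :
  ty k f = Some (a, b) -> ty k g = Some (c, d) -> ty k (tTens f g) = Some (a ++ c, b ++ d).
Proof. by move=> /= -> ->. Qed.

Lemma ty_comp (g f : term) a b c :
  ty k f = Some (a, b) -> ty k g = Some (b, c) -> ty k (tComp g f) = Some (a, c).
Proof. by move=> /= -> ->; rewrite eqxx. Qed.

Lemma ty_delta r s : ty k (@delta K r s) = Some ([::], [::]).
Proof. by rewrite /delta; case: eqP. Qed.

Lemma heq_ty (t u : term) : heq k t u -> ty k t = ty k u.
Proof.
elim=> //=; clear; rewrite /wt /=; intros; try congruence;
  repeat match goal with H : ty _ _ = _ |- _ => rewrite H; clear H end;
  repeat match goal with H : is_true _ |- _ => rewrite H /=; clear H end;
  rewrite ?ty_xpow ?ty_delta; try (rewrite ty_tsum; last first);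
  repeat (match goal with
    | H : is_true (_ != None) |- _ => move: H
    | |- context[match ty ?k ?t with _ => _ end] => case: (ty k t) => [[? ?]|] //=
    | |- context[?a == ?b] => case: (a =P b) => [?|] //=; try subst
    | |- context[if ?b then _ else _] => case: ifP => ? //=
    end); rewrite ?catA ?cats0 //; intros; try congruence.
all: rewrite all_map; apply/allP => r; rewrite mem_iota /= => r_lt.
all: rewrite /= ty_xpow r_lt andbT.
all: by do ![match goal with H : is_true _ |- _ => rewrite H; clear H end].
Qed.

Lemma wt_heq (t u : term) : heq k t u -> wt k t -> wt k u.
Proof. by move=> tu; rewrite /wt (heq_ty tu). Qed.

Lemma wt_comp (g f : term) : wt k (tComp g f) -> wt k g /\ wt k f.
Proof. by rewrite /wt /=; case: (ty k g) => [[? ?]|]; case: (ty k f) => [[? ?]|]. Qed.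

Lemma wt_tens (f g : term) : wt k (tTens f g) -> wt k f /\ wt k g.
Proof. by rewrite /wt /=; case: (ty k f) => [[? ?]|]; case: (ty k g) => [[? ?]|]. Qed.

Lemma wt_add (f g : term) : wt k (tAdd f g) -> wt k f /\ wt k g.
Proof. by rewrite /wt /=; case: (ty k f) => [[? ?]|]; case: (ty k g) => [[? ?]|]. Qed.

Ltac wt_of_ty := rewrite /wt /=;
  repeat match goal with H : ty _ ?a = _ |- context [ty _ ?a] => rewrite H /= end;
  rewrite ?eqxx.

Lemma compA_ty (h g f : term) a b c d :
  ty k f = Some (a, b) -> ty k g = Some (b, c) -> ty k h = Some (c, d) ->
  heq k (tComp h (tComp g f)) (tComp (tComp h g) f).
Proof. by move=> Hf Hg Hh; apply: heq_compA; wt_of_ty. Qed.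

Lemma tensA_ty (f g h : term) a b c d e e' :
  ty k f = Some (a, b) -> ty k g = Some (c, d) -> ty k h = Some (e, e') ->
  heq k (tTens f (tTens g h)) (tTens (tTens f g) h).
Proof. by move=> Hf Hg Hh; apply: heq_tensA; wt_of_ty. Qed.

Lemma interchange_ty (f f' g g' : term) a b c d e e' :
  ty k f = Some (a, b) -> ty k f' = Some (b, c) ->
  ty k g = Some (d, e) -> ty k g' = Some (e, e') ->
  heq k (tComp (tTens f' g') (tTens f g)) (tTens (tComp f' f) (tComp g' g)).
Proof. by move=> Hf Hf' Hg Hg'; apply: heq_interchange; wt_of_ty. Qed.

Lemma tId_cat a b : heq k (tId (a ++ b) : term) (tTens (tId a) (tId b)).
Proof. by symmetry; apply: heq_tensId. Qed.

Lemma tens_idr_comp (f f' : term) a b c e :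
  ty k f = Some (a, b) -> ty k f' = Some (b, c) ->
  heq k (tTens (tComp f' f) (tId e)) (tComp (tTens f' (tId e)) (tTens f (tId e))).
Proof.
move=> Hf Hf'; rewrite (interchange_ty (g := tId e) (g' := tId e) Hf Hf' (erefl _) (erefl _)).
by rewrite (heq_id_l (a := e)).
Qed.

Lemma tens_idl_comp (f f' : term) a b c e :
  ty k f = Some (a, b) -> ty k f' = Some (b, c) ->
  heq k (tTens (tId e) (tComp f' f)) (tComp (tTens (tId e) f') (tTens (tId e) f)).
Proof.
move=> Hf Hf'; rewrite (interchange_ty (f := tId e) (f' := tId e) (erefl _) (erefl _) Hf Hf').
by rewrite (heq_id_l (a := e)).
Qed.

Lemma tens_slide (f h : term) a b c d :
  ty k f = Some (a, b) -> ty k h = Some (c, d) ->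
  heq k (tComp (tTens (tId b) h) (tTens f (tId c)))
        (tComp (tTens f (tId d)) (tTens (tId a) h)).
Proof.
move=> Hf Hh.
rewrite (interchange_ty (f' := tId b) (g := tId c) Hf (erefl _) (erefl _) Hh).
rewrite (interchange_ty (f := tId a) (g' := tId d) (erefl _) Hf Hh (erefl _)).
by rewrite (heq_id_l Hf) (heq_id_r Hh) (heq_id_r Hf) (heq_id_l Hh).
Qed.

Lemma tOppK (f : term) : wt k f -> heq k (tOpp (tOpp f)) f.
Proof. by move=> wf; rewrite /tOpp heq_scalA // mulrNN mulr1 heq_scal1. Qed.

Lemma tOpp_zero a b : heq k (tOpp (tZero a b) : term) (tZero a b).
Proof.
rewrite -{2}(heq_addN (f := tZero a b) (erefl _)).
by rewrite heq_addC ?heq_add0 // /wt /= eqxx.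
Qed.

Lemma comp_tOpp2 (g f : term) : wt k (tComp g f) -> heq k (tComp (tOpp g) (tOpp f)) (tComp g f).
Proof. by move=> wgf; rewrite /tOpp heq_compZl ?heq_compZr //; apply: tOppK. Qed.

End Congruence.

Inductive gen := GX | GS | GC | GD.

Definition nat_of_gen (g : gen) : nat :=
  match g with GX => 0 | GS => 1 | GC => 2 | GD => 3 end.
Definition gen_of_nat (n : nat) : gen :=
  match n with 0 => GX | 1 => GS | 2 => GC | _ => GD end.
Lemma nat_of_genK : cancel nat_of_gen gen_of_nat. Proof. by case. Qed.
HB.instance Definition _ := hasDecEq.Build gen (inj_eqAxiom (can_inj nat_of_genK)).

Definition gen_dom (g : gen) : obj :=
  match g with GX => up | GS => up ++ up | GC => [::] | GD => up ++ dn end.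
Definition gen_cod (g : gen) : obj :=
  match g with GX => up | GS => up ++ up | GC => dn ++ up | GD => [::] end.

(* A layer [(p, g, q)] stands for [1_p (x) g (x) 1_q]; a diagram is a list of
   layers read bottom to top. *)
Definition layer := (obj * gen * obj)%type.

Definition layer_dom (L : layer) : obj := let: (p, g, q) := L in (p ++ gen_dom g) ++ q.
Definition layer_cod (L : layer) : obj := let: (p, g, q) := L in (p ++ gen_cod g) ++ q.

Fixpoint diag_cod (a : obj) (Ls : seq layer) : obj :=
  if Ls is L :: Ls' then diag_cod (layer_cod L) Ls' else a.
Fixpoint diag_typed (a : obj) (Ls : seq layer) : bool :=
  if Ls is L :: Ls' then (layer_dom L == a) && diag_typed (layer_cod L) Ls' else true.

Definition whisker_l (p : obj) (L : layer) : layer := let: (p', g, q) := L in (p ++ p', g, q).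
Definition whisker_r (q : obj) (L : layer) : layer := let: (p, g, q') := L in (p, g, q' ++ q).

Lemma diag_cod_cat a Ls Ls' : diag_cod a (Ls ++ Ls') = diag_cod (diag_cod a Ls) Ls'.
Proof. by elim: Ls a => //= L Ls IH a. Qed.

Lemma diag_typed_cat a Ls Ls' :
  diag_typed a (Ls ++ Ls') = diag_typed a Ls && diag_typed (diag_cod a Ls) Ls'.
Proof. by elim: Ls a => //= L Ls IH a; rewrite IH andbA. Qed.

Lemma diag_typed_whisker_r q a Ls : diag_typed a Ls ->
  diag_typed (a ++ q) (map (whisker_r q) Ls) /\
  diag_cod (a ++ q) (map (whisker_r q) Ls) = diag_cod a Ls ++ q.
Proof.
elim: Ls a => //= -[[p g] q'] Ls IH a /andP[/eqP <- /IH[]] /=.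
by rewrite !catA => -> ->; rewrite eqxx.
Qed.

Lemma diag_typed_whisker_l p a Ls : diag_typed a Ls ->
  diag_typed (p ++ a) (map (whisker_l p) Ls) /\
  diag_cod (p ++ a) (map (whisker_l p) Ls) = p ++ diag_cod a Ls.
Proof.
elim: Ls a => //= -[[p' g] q] Ls IH a /andP[/eqP <- /IH[]] /=.
by rewrite !catA => -> ->; rewrite eqxx.
Qed.

Inductive rule := ZigzagUp | ZigzagDn | SS | Braid.

Inductive move := Swap of nat | Rewrite of nat & rule.

Section Diagrams.
Variables (K : comPzRingType) (k : int).
Local Notation term := (term K).

Definition gen_term (g : gen) : term :=
  match g with GX => tX | GS => tS | GC => tC | GD => tD end.
Definition layer_term (L : layer) : term :=
  let: (p, g, q) := L in tTens (tTens (tId p) (gen_term g)) (tId q).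
Fixpoint diag_term (a : obj) (Ls : seq layer) : term :=
  if Ls is L :: Ls' then tComp (diag_term (layer_cod L) Ls') (layer_term L) else tId a.

Lemma ty_gen_term g : ty k (gen_term g) = Some (gen_dom g, gen_cod g).
Proof. by case: g. Qed.

Lemma ty_layer_term L : ty k (layer_term L) = Some (layer_dom L, layer_cod L).
Proof. by case: L => [[p g] q] /=; rewrite ty_gen_term. Qed.

Lemma ty_diag_term a Ls : diag_typed a Ls -> ty k (diag_term a Ls) = Some (a, diag_cod a Ls).
Proof.
elim: Ls a => //= L Ls IH a /andP[/eqP HL /IH ->].
by rewrite ty_layer_term HL eqxx.
Qed.

Lemma diag_term_cat a Ls Ls' : diag_typed a (Ls ++ Ls') ->
  heq k (diag_term a (Ls ++ Ls')) (tComp (diag_term (diag_cod a Ls) Ls') (diag_term a Ls)).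
Proof.
elim: Ls a => /= [|L Ls IH] a.
  by move=> typed; symmetry; apply: heq_id_r (ty_diag_term typed).
move=> /andP[/eqP HL typed]; rewrite (IH _ typed).
move: typed; rewrite diag_typed_cat => /andP[typed typed'].
by symmetry; apply: (compA_ty (ty_layer_term L) (ty_diag_term typed) (ty_diag_term typed')).
Qed.

Lemma layer_term_whisker_r q L : heq k (layer_term (whisker_r q L)) (tTens (layer_term L) (tId q)).
Proof.
by case: L => [[p g] q'] /=; rewrite tId_cat; apply: tensA_ty; rewrite /= ?ty_gen_term.
Qed.

Lemma layer_term_whisker_l p L : heq k (layer_term (whisker_l p L)) (tTens (tId p) (layer_term L)).
Proof.
case: L => [[p' g] q] /=; rewrite tId_cat.
rewrite -(tensA_ty (f := tId p) (g := tId p') (erefl _) (erefl _) (ty_gen_term g)).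
have ty_pg := ty_tens (k := k) (f := tId p') (erefl _) (ty_gen_term g).
by rewrite -(tensA_ty (f := tId p) (h := tId q) (erefl _) ty_pg (erefl _)).
Qed.

Lemma diag_term_whisker_r q a Ls : diag_typed a Ls ->
  heq k (diag_term (a ++ q) (map (whisker_r q) Ls)) (tTens (diag_term a Ls) (tId q)).
Proof.
elim: Ls a => /= [|L Ls IH] a; first by rewrite tId_cat.
move=> /andP[/eqP HL typed].
have -> : layer_cod (whisker_r q L) = layer_cod L ++ q by case: (L) => [[? ?] ?] /=; rewrite !catA.
rewrite (IH _ typed) layer_term_whisker_r.
rewrite (interchange_ty (g := tId q) (g' := tId q) (ty_layer_term L) (ty_diag_term typed)
                        (erefl _) (erefl _)).
by rewrite (heq_id_l (a := q)).
Qed.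

Lemma diag_term_whisker_l p a Ls : diag_typed a Ls ->
  heq k (diag_term (p ++ a) (map (whisker_l p) Ls)) (tTens (tId p) (diag_term a Ls)).
Proof.
elim: Ls a => /= [|L Ls IH] a; first by rewrite tId_cat.
move=> /andP[/eqP HL typed].
have -> : layer_cod (whisker_l p L) = p ++ layer_cod L by case: (L) => [[? ?] ?] /=; rewrite !catA.
rewrite (IH _ typed) layer_term_whisker_l.
rewrite (interchange_ty (f := tId p) (f' := tId p) (erefl _) (erefl _)
                        (ty_layer_term L) (ty_diag_term typed)).
by rewrite (heq_id_l (a := p)).
Qed.

Fixpoint diagram_of (t : term) : option (obj * obj * seq layer) :=
  match t with
  | tId a => Some (a, a, [::])
  | tX => Some (up, up, [:: ([::], GX, [::])])
  | tS => Some (up ++ up, up ++ up, [:: ([::], GS, [::])])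
  | tC => Some ([::], dn ++ up, [:: ([::], GC, [::])])
  | tD => Some (up ++ dn, [::], [:: ([::], GD, [::])])
  | tComp g f =>
      match diagram_of f, diagram_of g with
      | Some (a, b, Lf), Some (b', c, Lg) => if b == b' then Some (a, c, Lf ++ Lg) else None
      | _, _ => None
      end
  | tTens f g =>
      match diagram_of f, diagram_of g with
      | Some (a, b, Lf), Some (c, d, Lg) =>
          Some (a ++ c, b ++ d, map (whisker_r c) Lf ++ map (whisker_l b) Lg)
      | _, _ => None
      end
  | _ => None
  end.

Lemma gen_term_diag g : heq k (gen_term g) (diag_term (gen_dom g) [:: ([::], g, [::])]).
Proof.
rewrite /= (heq_id_l (ty_layer_term ([::], g, [::]))).
by case: g => /=; rewrite heq_tens1r ?heq_tens1l.
Qed.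

Lemma diagram_of_sound t a b Ls : diagram_of t = Some (a, b, Ls) ->
  [/\ diag_typed a Ls, diag_cod a Ls = b & heq k t (diag_term a Ls)].
Proof.
elim: t a b Ls => //=.
- by move=> c a b Ls [<- <- <-].
- by move=> a b Ls [<- <- <-]; split => //; apply: (gen_term_diag GX).
- by move=> a b Ls [<- <- <-]; split => //; apply: (gen_term_diag GS).
- by move=> a b Ls [<- <- <-]; split => //; apply: (gen_term_diag GC).
- by move=> a b Ls [<- <- <-]; split => //; apply: (gen_term_diag GD).
- move=> g IHg f IHf a c Ls.
  case Ef: (diagram_of f) => [[[a' b] Lf]|] //; case Eg: (diagram_of g) => [[[b' c'] Lg]|] //.
  case: eqP => // Eb [<- <- <-]; subst b'.
  have [typed_f cod_f f_diag] := IHf _ _ _ Ef; have [typed_g cod_g g_diag] := IHg _ _ _ Eg.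
  have typed : diag_typed a' (Lf ++ Lg) by rewrite diag_typed_cat typed_f cod_f.
  split => //; first by rewrite diag_cod_cat cod_f.
  by rewrite (diag_term_cat typed) cod_f -f_diag -g_diag.
- move=> f IHf g IHg a' b' Ls.
  case Ef: (diagram_of f) => [[[a b] Lf]|] //; case Eg: (diagram_of g) => [[[c d] Lg]|] //.
  case=> <- <- <-.
  have [typed_f cod_f f_diag] := IHf _ _ _ Ef; have [typed_g cod_g g_diag] := IHg _ _ _ Eg.
  have [typed_f' cod_f'] := diag_typed_whisker_r c typed_f.
  have [typed_g' cod_g'] := diag_typed_whisker_l b typed_g.
  have typed : diag_typed (a ++ c) (map (whisker_r c) Lf ++ map (whisker_l b) Lg).
    by rewrite diag_typed_cat typed_f' cod_f' cod_f typed_g'.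
  split => //; first by rewrite diag_cod_cat cod_f' cod_f cod_g' cod_g.
  rewrite (diag_term_cat typed) cod_f' cod_f (diag_term_whisker_l _ typed_g).
  rewrite (diag_term_whisker_r _ typed_f).
  have ty_f := ty_diag_term typed_f; have ty_g := ty_diag_term typed_g.
  rewrite cod_f in ty_f; rewrite cod_g in ty_g.
  rewrite (interchange_ty (f' := tId b) (g := tId c) ty_f (erefl _) (erefl _) ty_g).
  by rewrite (heq_id_l ty_f) (heq_id_r ty_g) -f_diag -g_diag.
Qed.

(* Interchange law: adjacent layers [L1] (below) and [L2] whose generators sit side by side
   commute. *)
Definition swap_layers (L1 L2 : layer) : option (seq layer) :=
  let: (p1, g1, q1) := L1 in let: (p2, g2, q2) := L2 in
  if size p1 + size (gen_cod g1) <= size p2 then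
    let m := drop (size p1 + size (gen_cod g1)) p2 in
    if (p2 == (p1 ++ gen_cod g1) ++ m) && (q1 == (m ++ gen_dom g2) ++ q2)
    then Some [:: ((p1 ++ gen_dom g1) ++ m, g2, q2); (p1, g1, (m ++ gen_cod g2) ++ q2)]
    else None
  else if size p2 + size (gen_dom g2) <= size p1 then
    let m := drop (size p2 + size (gen_dom g2)) p1 in
    if (p1 == (p2 ++ gen_dom g2) ++ m) && (q2 == (m ++ gen_cod g1) ++ q1)
    then Some [:: (p2, g2, (m ++ gen_dom g1) ++ q1); ((p2 ++ gen_cod g2) ++ m, g1, q1)]
    else None
  else None.

Lemma layer_terms_commute p m q g1 g2 :
  heq k (tComp (layer_term ((p ++ gen_cod g1) ++ m, g2, q))
               (layer_term (p, g1, (m ++ gen_dom g2) ++ q)))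
        (tComp (layer_term (p, g1, (m ++ gen_cod g2) ++ q))
               (layer_term ((p ++ gen_dom g1) ++ m, g2, q))).
Proof.
rewrite (layer_term_whisker_l (p ++ gen_cod g1) (m, g2, q)).
rewrite (layer_term_whisker_l (p ++ gen_dom g1) (m, g2, q)) /=.
apply: tens_slide; last exact: (ty_layer_term (m, g2, q)).
exact: (ty_tens (f := tId p) (erefl _) (ty_gen_term g1)).
Qed.

Lemma swap_layers_sound a L1 L2 Ls : swap_layers L1 L2 = Some Ls ->
  diag_typed a [:: L1; L2] -> diag_typed a Ls ->
  heq k (diag_term a [:: L1; L2]) (diag_term a Ls).
Proof.
have two_layers b M1 M2 : heq k (diag_term b [:: M1; M2]) (tComp (layer_term M2) (layer_term M1)).
  by rewrite /= (heq_id_l (ty_layer_term M2)).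
case: L1 => [[p1 g1] q1]; case: L2 => [[p2 g2] q2]; rewrite [swap_layers _ _]/=.
case: ifP => _.
  set m := drop _ p2; case: ifP => // /andP[/eqP E1 /eqP E2] [<-] _ _.
  by rewrite !two_layers E1 E2; apply: layer_terms_commute.
case: ifP => // _; set m := drop _ p1; case: ifP => // /andP[/eqP E1 /eqP E2] [<-] _ _.
by rewrite !two_layers E1 E2; symmetry; apply: layer_terms_commute.
Qed.

Lemma diag_term_splice a pre Ls Ls' post :
  diag_typed a (pre ++ Ls ++ post) -> diag_typed a (pre ++ Ls' ++ post) ->
  heq k (diag_term (diag_cod a pre) Ls) (diag_term (diag_cod a pre) Ls') ->
  heq k (diag_term a (pre ++ Ls ++ post)) (diag_term a (pre ++ Ls' ++ post)).
Proof.
move=> typed typed' eq_mid.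
have := typed; have := typed'; rewrite !diag_typed_cat.
move=> /and3P[_ mid' typed_post'] /and3P[_ mid typed_post].
have cod_mid : diag_cod (diag_cod a pre) Ls = diag_cod (diag_cod a pre) Ls'.
  by have := heq_ty eq_mid; rewrite (ty_diag_term mid) (ty_diag_term mid') => -[].
rewrite (diag_term_cat typed) (diag_term_cat typed').
rewrite (diag_term_cat (Ls := Ls) (a := diag_cod a pre)) ?diag_typed_cat ?mid ?typed_post //.
rewrite (diag_term_cat (Ls := Ls') (a := diag_cod a pre)) ?diag_typed_cat ?mid' ?typed_post' //.
by rewrite cod_mid eq_mid.
Qed.

Definition rule_terms (r : rule) : term * term :=
  match r with
  | ZigzagUp => (tComp (tTens tD (tId up)) (tTens (tId up) tC), tId up)
  | ZigzagDn => (tComp (tTens (tId dn) tD) (tTens tC (tId dn)), tId dn)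
  | SS => (tComp tS tS, tId (up ++ up))
  | Braid => (tComp (tTens (tId up) tS) (tComp (tTens tS (tId up)) (tTens (tId up) tS)),
              tComp (tTens tS (tId up)) (tComp (tTens (tId up) tS) (tTens tS (tId up))))
  end.

Lemma rule_sound r : heq k (rule_terms r).1 (rule_terms r).2.
Proof.
by case: r; [apply: heq_adj1 | apply: heq_adj2 | apply: heq_ss | symmetry; apply: heq_braid].
Qed.

Definition whisker (p q : obj) (Ls : seq layer) : seq layer :=
  map (whisker_l p) (map (whisker_r q) Ls).

Lemma diag_term_whisker p q a Ls : diag_typed a Ls ->
  heq k (diag_term (p ++ (a ++ q)) (whisker p q Ls))
        (tTens (tId p) (tTens (diag_term a Ls) (tId q))).
Proof.
move=> typed; have [typed' _] := diag_typed_whisker_r q typed.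
by rewrite (diag_term_whisker_l _ typed') (diag_term_whisker_r _ typed).
Qed.

(* The whiskering objects [p], [q] of the occurrence are read off its first layer. *)
Definition rewrite_at (a : obj) (i : nat) (r : rule) (Ls : seq layer) : option (seq layer) :=
  match diagram_of (rule_terms r).1, diagram_of (rule_terms r).2, drop i Ls with
  | Some (x, _, ((p0, _, q0) :: _) as L), Some (x', _, R), (P, _, Q) :: _ =>
      let p := take (size P - size p0) P in
      let q := drop (size q0) Q in
      if [&& x' == x, take (size L) (drop i Ls) == whisker p q L
           & diag_cod a (take i Ls) == p ++ (x ++ q)]
      then Some (take i Ls ++ whisker p q R ++ drop (size L) (drop i Ls))
      else None
  | _, _, _ => None
  end.

Lemma rewrite_at_sound a i r Ls Ls' : diag_typed a Ls -> diag_typed a Ls' ->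
  rewrite_at a i r Ls = Some Ls' -> heq k (diag_term a Ls) (diag_term a Ls').
Proof.
rewrite /rewrite_at => typed typed'.
case EL: (diagram_of _) => [[[x ?] [|[[p0 ?] q0] L]]|] //.
case ER: (diagram_of _) => [[[x' ?] R]|] //.
case Ei: (drop i Ls) => [|[[P ?] Q] ?] //; rewrite -Ei.
set p := take _ P; set q := drop _ Q; set L' := _ :: L.
case: ifP => // /and3P[/eqP ex /eqP occ /eqP cod_pre] [Els']; subst x' Ls'.
have Ls_split : Ls = take i Ls ++ whisker p q L' ++ drop (size L') (drop i Ls).
  by rewrite -occ !cat_take_drop.
rewrite {1}Ls_split; apply: diag_term_splice => //; first by rewrite -Ls_split.
have [typed_L _ eq_L] := diagram_of_sound EL; have [typed_R _ eq_R] := diagram_of_sound ER.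
have := rule_sound r; rewrite eq_L eq_R cod_pre => rule_eq.
by rewrite !diag_term_whisker // rule_eq.
Qed.

Definition swap_at (i : nat) (Ls : seq layer) : option (seq layer) :=
  if drop i Ls is L1 :: L2 :: rest then
    omap (fun s => take i Ls ++ s ++ rest) (swap_layers L1 L2)
  else None.

Lemma swap_at_sound a i Ls Ls' : diag_typed a Ls -> diag_typed a Ls' ->
  swap_at i Ls = Some Ls' -> heq k (diag_term a Ls) (diag_term a Ls').
Proof.
rewrite /swap_at => typed typed'.
case Ei: (drop i Ls) => [|L1 [|L2 rest]] //.
case S: (swap_layers L1 L2) => [s|] //= [Els']; subst Ls'.
have Ls_split : Ls = take i Ls ++ [:: L1; L2] ++ rest by rewrite /= -Ei cat_take_drop.
rewrite {1}Ls_split; apply: diag_term_splice => //; first by rewrite -Ls_split.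
move: (typed) (typed'); rewrite {1}Ls_split !diag_typed_cat.
move=> /and3P[_ typed12 _] /and3P[_ typed_s _].
exact: swap_layers_sound S typed12 typed_s.
Qed.

Definition step (a : obj) (m : move) (Ls : seq layer) : option (seq layer) :=
  match m with
  | Swap i => swap_at i Ls
  | Rewrite i r => rewrite_at a i r Ls
  end.

Fixpoint run_moves (a : obj) (ms : seq move) (Ls : seq layer) : option (seq layer) :=
  if ms is m :: ms' then
    if step a m Ls is Some Ls' then
      if diag_typed a Ls' then run_moves a ms' Ls' else None
    else None
  else Some Ls.

Lemma run_moves_sound a ms Ls Ls' : diag_typed a Ls ->
  run_moves a ms Ls = Some Ls' -> heq k (diag_term a Ls) (diag_term a Ls').
Proof.
elim: ms Ls => [|m ms IH] Ls typed /=; first by case=> ->.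
case S: (step a m Ls) => [Ls1|] //; case: ifP => // typed1 run.
rewrite -(IH _ typed1 run).
by case: m S => [i|i r] /=; [apply: swap_at_sound | apply: rewrite_at_sound].
Qed.

Definition diag_check (t u : term) (ms ms' : seq move) : bool :=
  match diagram_of t, diagram_of u with
  | Some (a, _, Ls), Some (a', _, Ls') =>
      (a == a') && if run_moves a ms Ls is Some M then run_moves a ms' Ls' == Some M else false
  | _, _ => false
  end.

Lemma diag_check_sound t u ms ms' : diag_check t u ms ms' -> heq k t u.
Proof.
rewrite /diag_check.
case Et: (diagram_of t) => [[[a ?] Ls]|] //; case Eu: (diagram_of u) => [[[a' ?] Ls']|] //.
case/andP => /eqP Ea; subst a'; case Rt: (run_moves a ms Ls) => [M|] // /eqP Ru.
have [typed _ t_diag] := diagram_of_sound Et; have [typed' _ u_diag] := diagram_of_sound Eu.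
by rewrite t_diag u_diag (run_moves_sound typed Rt) (run_moves_sound typed' Ru).
Qed.

End Diagrams.
Arguments diag_check_sound {K k t u ms ms'}.

(* [swaps_down i j] moves layer [i.+1] down to position [j]; [swaps_up i j] moves layer [i]
   up to position [j.+1]. *)
Definition swaps_down (i j : nat) : seq move := [seq Swap (i - n) | n <- iota 0 (i - j).+1].
Definition swaps_up (i j : nat) : seq move := [seq Swap n | n <- iota i (j - i).+1].

Fixpoint omega_map {K : comPzRingType} (t : term K) : term K :=
  match t with
  | tId a => tId (swapo a)
  | tX => tX'
  | tS => tOpp tS'
  | tC => tD
  | tD => tC
  | tInvT => tOpp tInvT
  | tInvC r => tInvE r
  | tInvE r => tInvC r
  | tComp g f => tComp (omega_map f) (omega_map g)
  | tTens f g => tTens (omega_map f) (omega_map g)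
  | tZero a b => tZero (swapo b) (swapo a)
  | tAdd f g => tAdd (omega_map f) (omega_map g)
  | tScal c f => tScal c (omega_map f)
  end.

Lemma swapo_cat a b : swapo (a ++ b) = swapo a ++ swapo b.
Proof. exact: map_cat. Qed.

Lemma swapoK : involutive swapo.
Proof. by move=> a; rewrite /swapo -map_comp map_id_in // => x _ /=; rewrite negbK. Qed.

Lemma nonneg_index_opp (k : int) r :
  (0 <= k)%R -> (r < `|k|)%N -> (- k < 0)%R /\ (r < `|(- k)%R|)%N.
Proof.
move=> k_ge0 r_lt; rewrite abszN oppr_lt0 lt0r k_ge0 andbT; split=> //.
by apply: contraTneq r_lt => ->.
Qed.

Lemma neg_index_opp (k : int) r :
  (k < 0)%R -> (r < `|k|)%N -> (0 <= - k)%R /\ (r < `|(- k)%R|)%N.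
Proof. by move=> k_lt0 r_lt; rewrite abszN oppr_ge0 ltW. Qed.

Section OmegaTyping.
Variables (K : comPzRingType) (k : int).
Local Notation term := (term K).

Lemma ty_omega (t : term) a b :
  ty k t = Some (a, b) -> ty (- k) (omega_map t) = Some (swapo b, swapo a).
Proof.
elim: t a b => /=; try by move=> > [<- <-].
- move=> r a b; case: ifP => // /andP[k_ge0 r_lt] [<- <-].
  by have [-> ->] := nonneg_index_opp k_ge0 r_lt.
- move=> r a b; case: ifP => // /andP[k_lt0 r_lt] [<- <-].
  by have [-> ->] := neg_index_opp k_lt0 r_lt.
- move=> g IHg f IHf a c.
  case Eg: (ty k g) => [[b' c']|] //; case Ef: (ty k f) => [[a' b]|] //.
  case: eqP => // Eb [<- <-]; subst b'.
  by rewrite (IHg _ _ Eg) (IHf _ _ Ef) eqxx.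
- move=> f IHf g IHg a b.
  case Ef: (ty k f) => [[? ?]|] //; case Eg: (ty k g) => [[? ?]|] // [<- <-].
  by rewrite (IHg _ _ Eg) (IHf _ _ Ef) !swapo_cat.
- move=> f IHf g IHg a b.
  case Ef: (ty k f) => [[a1 b1]|] //; case Eg: (ty k g) => [[a2 b2]|] //.
  case: eqP => // -[E1 E2] [<- <-]; subst a2 b2.
  by rewrite (IHg _ _ Eg) (IHf _ _ Ef) eqxx.
- by move=> c f IHf a b /IHf.
Qed.

Lemma wt_omega (t : term) : wt k t -> wt (- k) (omega_map t).
Proof. by rewrite /wt; case E: (ty k t) => [[a b]|] // _; rewrite (ty_omega E). Qed.

End OmegaTyping.

Section Mates.
Variables (K : comPzRingType) (k : int).
Local Notation term := (term K).

Lemma tX'_cup : heq k (tComp (tTens tX' (tId up)) tC : term) (tComp (tTens (tId dn) tX) tC).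
Proof.
apply: (diag_check_sound (ms := swaps_up 0 1 ++ [:: Rewrite 2 ZigzagUp]) (ms' := [::])).
by vm_compute.
Qed.

Lemma tX'_cap : heq k (tComp tD (tTens (tId up) tX') : term) (tComp tD (tTens tX (tId dn))).
Proof.
apply: (diag_check_sound (ms := swaps_down 2 1 ++ [:: Rewrite 0 ZigzagUp]) (ms' := [::])).
by vm_compute.
Qed.

Lemma tS'_tS' : heq k (tComp tS' tS' : term) (tId (dn ++ dn)).
Proof.
apply: (diag_check_sound (ms' := [::])
  (ms := swaps_down 4 0 ++ swaps_down 5 1 ++ swaps_down 6 2 ++ swaps_down 7 4 ++
         [:: Rewrite 3 ZigzagUp] ++ swaps_down 6 4 ++
         [:: Rewrite 3 ZigzagUp; Rewrite 2 SS; Swap 1; Rewrite 0 ZigzagDn; Rewrite 0 ZigzagDn])).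
by vm_compute.
Qed.

Lemma tS'_braid :
  heq k (tComp (tTens tS' (tId dn)) (tComp (tTens (tId dn) tS') (tTens tS' (tId dn))) : term)
        (tComp (tTens (tId dn) tS') (tComp (tTens tS' (tId dn)) (tTens (tId dn) tS'))).
Proof.
apply: (diag_check_sound
  (ms := swaps_down 4 1 ++ swaps_down 5 2 ++ swaps_down 6 3 ++ swaps_down 7 5 ++
         [:: Rewrite 4 ZigzagUp] ++ swaps_down 7 0 ++ swaps_down 8 1 ++ swaps_down 9 2 ++
         swaps_down 10 4 ++ [:: Rewrite 3 ZigzagUp] ++ swaps_down 9 4 ++
         [:: Rewrite 3 ZigzagUp; Swap 2; Rewrite 3 Braid; Swap 5])
  (ms' := swaps_down 9 6 ++ swaps_down 10 7 ++ swaps_down 11 8 ++ swaps_down 12 10 ++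
          [:: Rewrite 9 ZigzagUp] ++ swaps_down 4 1 ++ swaps_down 5 2 ++ swaps_down 6 3 ++
          swaps_down 7 4 ++ swaps_down 8 5 ++ swaps_down 9 6 ++ swaps_down 10 7 ++
          swaps_down 11 9 ++ [:: Rewrite 8 ZigzagUp] ++ swaps_up 0 5 ++ [:: Rewrite 6 ZigzagUp])).
by vm_compute.
Qed.

Lemma omega_tX' : heq k (omega_map tX' : term) tX.
Proof.
apply: (diag_check_sound (ms' := [::])
  (ms := swaps_up 0 1 ++ [:: Rewrite 2 ZigzagUp; Swap 1; Rewrite 0 ZigzagUp])).
by vm_compute.
Qed.

Lemma omega_tT : heq k (omega_map tT : term) (tOpp tT).
Proof.
have tS'_mate :
    heq k (tComp (tComp (tTens tD (tId (dn ++ up))) (tTens (tId up) (tTens tS' (tId up))))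
                 (tTens (tId (up ++ dn)) tC) : term) tT.
  apply: (diag_check_sound (ms' := [::])
    (ms := swaps_up 0 3 ++ [:: Rewrite 4 ZigzagUp] ++ swaps_down 3 1 ++ [:: Rewrite 0 ZigzagUp])).
  by vm_compute.
rewrite /= /tOpp heq_tensZl // heq_tensZr // heq_compZr // heq_compZl //.
exact: heq_scal tS'_mate.
Qed.

Lemma omega_tS' : heq k (omega_map tS' : term) (tOpp tS).
Proof.
have tT_mate :
    heq k (tComp (tComp (tTens tD (tId (up ++ up))) (tTens (tId up) (tTens tT (tId up))))
                 (tTens (tId (up ++ up)) tC) : term) tS.
  apply: (diag_check_sound (ms' := [::])
    (ms := swaps_up 0 1 ++ [:: Rewrite 2 ZigzagUp; Swap 1; Rewrite 0 ZigzagUp])).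
  by vm_compute.
have -> : omega_map tS' = tComp (tComp (tTens tD (tId (up ++ up)))
    (tTens (tId up) (tTens (omega_map tT) (tId up)))) (tTens (tId (up ++ up)) tC) :> term by [].
rewrite omega_tT /tOpp heq_tensZl // heq_tensZr // heq_compZr // heq_compZl //.
exact: heq_scal tT_mate.
Qed.

Ltac solve_ty := repeat first [reflexivity | eassumption | apply: ty_tens | apply: ty_comp].

Lemma ty_omega_xpow r : ty k (omega_map (@xpow K r)) = Some (dn, dn).
Proof. by have := ty_omega (@ty_xpow K (- k) r); rewrite opprK. Qed.

Lemma omega_dr r : heq k (omega_map (@dr K r)) (cr r).
Proof.
rewrite /dr /cr /=; elim: r => // r IH.
have ty_O := ty_omega_xpow r; have ty_x := @ty_xpow K k r.
set O := omega_map (xpow r) in ty_O IH *.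
rewrite /= -/O (tens_idr_comp (f := tX') (f' := O) up).
rewrite -(compA_ty (f := tC) (g := tTens tX' (tId up)) (h := tTens O (tId up))).
rewrite tX'_cup (compA_ty (f := tC) (g := tTens (tId dn) tX) (h := tTens O (tId up))).
rewrite -(tens_slide (f := O) (h := tX) (a := dn) (b := dn) (c := up) (d := up)).
rewrite -(compA_ty (f := tC) (g := tTens O (tId up)) (h := tTens (tId dn) tX)).
rewrite IH (compA_ty (f := tC)).
rewrite -(tens_idl_comp (f := xpow r) (f' := tX)) //.
all: solve_ty.
Qed.

Lemma omega_cr r : heq k (omega_map (@cr K r)) (dr r).
Proof.
rewrite /dr /cr /=; elim: r => // r IH.
have ty_O := ty_omega_xpow r; have ty_x := @ty_xpow K k r.
set O := omega_map (xpow r) in ty_O IH *.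
rewrite /= -/O (tens_idl_comp (f := tX') (f' := O) up).
rewrite (compA_ty (h := tD) (g := tTens (tId up) O) (f := tTens (tId up) tX')).
rewrite IH -(compA_ty (h := tD) (g := tTens (xpow r) (tId dn)) (f := tTens (tId up) tX')).
rewrite -(tens_slide (f := xpow r) (h := tX') (a := up) (b := up) (c := dn) (d := dn)).
rewrite (compA_ty (h := tD) (g := tTens (tId up) tX')).
rewrite tX'_cap -(compA_ty (h := tD)).
rewrite -(tens_idr_comp (f := xpow r) (f' := tX)) //.
all: solve_ty.
Qed.

(* [mate2 h] is [h : up up -> up up] rotated by 180 degrees. *)
Definition cup2 : term := tComp (tTens (tId dn) (tTens tC (tId up))) tC.
Definition cap2 : term := tComp tD (tTens (tId up) (tTens tD (tId dn))).
Definition mate2 (h : term) : term :=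
  tComp (tTens (tId (dn ++ dn)) cap2)
    (tComp (tTens (tId (dn ++ dn)) (tTens h (tId (dn ++ dn)))) (tTens cup2 (tId (dn ++ dn)))).

#[global] Instance mate2_Proper : Proper (heq k ==> heq k) mate2.
Proof. by move=> h h' hh'; rewrite /mate2 hh'. Qed.

Lemma mate2_add (h h' : term) :
  ty k h = Some (up ++ up, up ++ up) -> ty k h' = Some (up ++ up, up ++ up) ->
  heq k (mate2 (tAdd h h')) (tAdd (mate2 h) (mate2 h')).
Proof.
move=> ty_h ty_h'; rewrite /mate2 heq_tensDl ?heq_tensDr ?heq_compDl ?heq_compDr //.
all: by rewrite /wt /= ?ty_h ?ty_h'.
Qed.

Lemma mate2_scal c (h : term) : ty k h = Some (up ++ up, up ++ up) ->
  heq k (mate2 (tScal c h)) (tScal c (mate2 h)).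
Proof.
move=> ty_h; rewrite /mate2 heq_tensZl ?heq_tensZr ?heq_compZl ?heq_compZr //.
all: by rewrite /wt /= ?ty_h.
Qed.

Lemma mate2_id : heq k (mate2 (tId (up ++ up))) (tId (dn ++ dn)).
Proof.
apply: (diag_check_sound (ms' := [::]) (ms := [:: Swap 1; Rewrite 0 ZigzagDn; Rewrite 0 ZigzagDn])).
by vm_compute.
Qed.

Lemma mate2_tS_tX : heq k (mate2 (tComp tS (tTens tX (tId up)))) (tComp (tTens (tId dn) tX') tS').
Proof.
apply: (diag_check_sound (ms := [::])
  (ms' := swaps_down 4 1 ++ swaps_down 5 2 ++ swaps_down 6 4 ++ [:: Rewrite 3 ZigzagUp])).
by vm_compute.
Qed.

Lemma mate2_tX_tS : heq k (mate2 (tComp (tTens (tId up) tX) tS)) (tComp tS' (tTens tX' (tId dn))).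
Proof.
apply: (diag_check_sound (ms := [::])
  (ms' := swaps_down 2 0 ++ swaps_down 3 1 ++ swaps_down 4 2 ++ swaps_down 5 4 ++
          [:: Rewrite 3 ZigzagUp])).
by vm_compute.
Qed.

(* Relation (H) conjugated by [s]. *)
Lemma tS_dAHA :
  heq k (tSub (tComp tS (tTens tX (tId up))) (tComp (tTens (tId up) tX) tS) : term)
        (tId (up ++ up)).
Proof.
transitivity
  (tComp tS (tComp (tSub (tComp (tTens tX (tId up)) tS) (tComp tS (tTens (tId up) tX))) tS) : term).
  rewrite /tSub /tOpp heq_compDl // heq_compZl // heq_compDr // heq_compZr //.
  apply: heq_add.
    rewrite -(compA_ty (f := tS) (g := tS) (h := tTens tX (tId up))) // heq_ss.
    by rewrite (heq_id_r (a := up ++ up) (b := up ++ up)).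
  apply: heq_scal.
  rewrite (compA_ty (f := tS) (h := tS) (g := tComp tS (tTens (tId up) tX))) //.
  rewrite (compA_ty (f := tTens (tId up) tX) (h := tS) (g := tS)) // heq_ss.
  by rewrite (heq_id_l (a := up ++ up) (b := up ++ up)).
by rewrite heq_dAHA (heq_id_l (f := tS)) //; apply: heq_ss.
Qed.

Lemma omega_ss : heq k (omega_map (tComp tS tS : term)) (tId (dn ++ dn)).
Proof. by rewrite /= comp_tOpp2 // tS'_tS'. Qed.

Lemma omega_braid :
  heq k (omega_map (tComp (tTens tS (tId up)) (tComp (tTens (tId up) tS) (tTens tS (tId up))))
         : term)
        (omega_map (tComp (tTens (tId up) tS) (tComp (tTens tS (tId up)) (tTens (tId up) tS)))).
Proof.
rewrite /= /tOpp !heq_tensZl // !heq_tensZr // !heq_compZl // !heq_compZr // !heq_compZl //.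
rewrite !heq_scalA //.
by rewrite -!(compA_ty (f := tTens _ _) (g := tTens _ _) (h := tTens _ _)) // tS'_braid.
Qed.

Lemma omega_dAHA :
  heq k (omega_map (tSub (tComp (tTens tX (tId up)) tS) (tComp tS (tTens (tId up) tX))) : term)
        (tId (dn ++ dn)).
Proof.
rewrite -mate2_id -tS_dAHA /tSub /tOpp mate2_add // mate2_scal // mate2_tS_tX mate2_tX_tS /=.
rewrite heq_compZl // heq_compZr // heq_scalA // mulrNN mulr1 heq_scal1 // heq_addC //.
Qed.

End Mates.

Section OmegaFunctor.
Variable K : comPzRingType.
Local Notation term := (term K).

Lemma omega_tsum a b (fs : seq term) :
  omega_map (tsum a b fs) = tsum (swapo b) (swapo a) (map omega_map fs).
Proof. by elim: fs => //= f fs ->. Qed.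

Lemma omega_delta r s : omega_map (@delta K r s) = delta s r.
Proof. by rewrite /delta eq_sym; case: (s == r). Qed.

Lemma tsum_heq k a b (F G : nat -> term) rs : (forall r, r \in rs -> heq k (F r) (G r)) ->
  heq k (tsum a b (map F rs)) (tsum a b (map G rs)).
Proof.
elim: rs => //= r rs IH FG; apply: heq_add; first by apply: FG; rewrite inE eqxx.
by apply: IH => x xrs; apply: FG; rewrite inE xrs orbT.
Qed.

Lemma omega_tsum_dr k rs :
  heq k (omega_map (tsum (up ++ dn) (up ++ dn) [seq tComp (tInvC r) (dr r) | r <- rs]))
        (tsum (dn ++ up) (dn ++ up) [seq tComp (cr r) (tInvE r) | r <- rs] : term).
Proof.
rewrite omega_tsum -map_comp; apply: tsum_heq => r _.
by apply: heq_comp; [apply: omega_dr |].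
Qed.

Lemma omega_tsum_cr k rs :
  heq k (omega_map (tsum (dn ++ up) (dn ++ up) [seq tComp (cr r) (tInvE r) | r <- rs]))
        (tsum (up ++ dn) (up ++ dn) [seq tComp (tInvC r) (dr r) | r <- rs] : term).
Proof.
rewrite omega_tsum -map_comp; apply: tsum_heq => r _.
by apply: heq_comp; [| apply: omega_cr].
Qed.

Lemma omega_heq k (t u : term) : heq k t u -> wt k t -> heq (- k) (omega_map t) (omega_map u).
Proof.
elim=> {t u} //; cbn -[tT tS' tX' dr cr tsum delta GRing.opp Order.le Order.lt leq].
- by move=> t u tu IH wu; symmetry; apply: IH; apply: wt_heq wu; symmetry.
- by move=> t u v tu IH1 _ IH2 wt_t; rewrite (IH1 wt_t) (IH2 (wt_heq tu wt_t)).
- by move=> g g' f f' _ IHg _ IHf /wt_comp[/IHg -> /IHf ->].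
- by move=> f f' g g' _ IHf _ IHg /wt_tens[/IHf -> /IHg ->].
- by move=> f f' g g' _ IHf _ IHg /wt_add[/IHf -> /IHg ->].
- by move=> c f f' _ IH /IH ->.
- by move=> h g f w _; symmetry; apply: heq_compA (wt_omega (wt_heq (heq_compA w) w)).
- by move=> f a b /ty_omega /heq_id_r.
- by move=> f a b /ty_omega /heq_id_l.
all: try by move=> > w _; constructor; apply: wt_omega w.
all: try by move=> > /ty_omega ty_f _; constructor; apply: ty_f.
- by move=> a b _; rewrite swapo_cat; apply: heq_tensId.
- by move=> _; apply: omega_ss.
- by move=> _; apply: omega_braid.
- by move=> _; apply: omega_dAHA.
- by move=> _; apply: heq_adj2.
- by move=> _; apply: heq_adj1.
- move=> k_ge0 _; rewrite omega_tT comp_tOpp2 // omega_tsum_dr.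
  move: k_ge0; rewrite le0r => /orP[/eqP k0 | k_gt0].
    (* For k = 0 the sum is empty and omega exchanges the relations I1 and I2 of Heis_0. *)
    by subst k; rewrite /= heq_add0 //; apply: heq_I2; rewrite oppr0.
  by rewrite -abszN; apply: heq_J1; rewrite oppr_lt0.
- move=> k_ge0 _; rewrite omega_tT comp_tOpp2 //.
  move: k_ge0; rewrite le0r => /orP[/eqP k0 | k_gt0]; last by apply: heq_J2; rewrite oppr_lt0.
  by subst k; rewrite oppr0 -(@heq_I1 K 0) // heq_add0.
- move=> r k_ge0 r_lt _; have [k_lt0 r_lt'] := nonneg_index_opp k_ge0 r_lt.
  rewrite omega_tT /tOpp heq_compZr; last by rewrite /wt /= k_lt0 r_lt'.
  by rewrite heq_J4 //; apply: tOpp_zero.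
- move=> r k_ge0 r_lt _; have [k_lt0 r_lt'] := nonneg_index_opp k_ge0 r_lt.
  rewrite omega_dr /tOpp heq_compZl; last by rewrite /wt /= ty_xpow.
  by rewrite heq_J3 //; apply: tOpp_zero.
- move=> r s k_ge0 r_lt s_lt _; rewrite omega_dr omega_delta.
  have [k_lt0 _] := nonneg_index_opp k_ge0 r_lt.
  by apply: heq_J5; rewrite ?abszN.
- move=> k_lt0 _; rewrite omega_tT comp_tOpp2 // omega_tsum_cr.
  by rewrite -abszN; apply: heq_I1; rewrite oppr_ge0 ltW.
- by move=> k_lt0 _; rewrite omega_tT comp_tOpp2 //; apply: heq_I2; rewrite oppr_ge0 ltW.
- move=> r k_lt0 r_lt _; have [k_ge0 r_lt'] := neg_index_opp k_lt0 r_lt.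
  rewrite omega_cr /tOpp heq_compZr; last by rewrite /wt /= ty_xpow.
  by rewrite heq_I4 //; apply: tOpp_zero.
- move=> r k_lt0 r_lt _; have [k_ge0 r_lt'] := neg_index_opp k_lt0 r_lt.
  rewrite omega_tT /tOpp heq_compZl; last by rewrite /wt /= k_ge0 r_lt'.
  by rewrite heq_I3 //; apply: tOpp_zero.
- move=> r s k_lt0 r_lt s_lt _; rewrite omega_cr omega_delta.
  have [k_ge0 _] := neg_index_opp k_lt0 r_lt.
  by apply: heq_I5; rewrite ?abszN.
Qed.

Lemma omega_involutive k (t : term) : wt k t -> heq k (omega_map (omega_map t)) t.
Proof.
elim: t => //; cbn -[tX' tS'].
- by move=> a _; rewrite swapoK.
- by move=> _; apply: omega_tX'.
- by move=> _; rewrite omega_tS'; apply: tOppK.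
- by move=> _; apply: tOppK.
- by move=> g IHg f IHf /wt_comp[/IHg -> /IHf ->].
- by move=> f IHf g IHg /wt_tens[/IHf -> /IHg ->].
- by move=> a b _; rewrite !swapoK.
- by move=> f IHf g IHg /wt_add[/IHf -> /IHg ->].
- by move=> c f IHf /IHf ->.
Qed.

End OmegaFunctor.

Theorem lemma2p1 (K : comPzRingType) (k : int) :
  exists (omega : term K -> term K) (omega_inv : term K -> term K),
    op_monoidal_functor k (- k)%R omega /\
        heq (- k)%R (omega tX) tX' /\
        heq (- k)%R (omega tS) (tOpp tS') /\
        heq (- k)%R (omega tC) tD /\
        heq (- k)%R (omega tD) tC /\
        (* omega_inv is a well-defined map on morphisms of Heis_{-k}^op back to Heis_k *)
        (forall t a b, ty (- k)%R t = Some (a, b) -> ty k (omega_inv t) = Some (swapo b, swapo a)) /\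
        (forall t u, wt (- k)%R t -> heq (- k)%R t u -> heq k (omega_inv t) (omega_inv u)) /\
        (* two-sided inverse on morphisms (the object map swapo is an involution) *)
        (forall t, wt k t -> heq k (omega_inv (omega t)) t) /\
        (forall u, wt (- k)%R u -> heq (- k)%R (omega (omega_inv u)) u).
Proof.
exists omega_map, omega_map.
split; first by split; [apply: ty_omega | split; [by move=> t u wt_t /omega_heq; apply | by do !split]].
do 4 (split; first by []).
split; first by move=> t a b /ty_omega; rewrite opprK.
split; first by move=> t u wt_t /omega_heq /(_ wt_t); rewrite opprK.
by split; apply: omega_involutive.
Qed.
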